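(* Let $k,n$ be integers with $2\le k\le n$. Then $d^E_2(n,k)\le \max\{d^E_2(n-1,k-1),\,d^E_2(n-2,k-2)\}$.
   Context: For $k\le n$, $d^E_2(n,k)$ denotes the largest minimum distance among all binary Euclidean LCD $[n,k]$ codes, i.e. $k$-dimensional subspaces $C\subseteq\mathbb{F}_2^n$ with $C\cap C^{\perp_E}=\{0\}$, where $C^{\perp_E}$ is the dual with respect to $\langle x,y\rangle_E=\sum x_iy_i$. *)

From mathcomp Require Import all_boot all_order all_algebra.
Set Implicit Arguments. Unset Strict Implicit. Unset Printing Implicit Defensive.
Import GRing.Theory.

(* Binary linear codes of length n and dimension k are represented by a
   generator matrix G : 'M['F_2]_(k, n) with linearly independent rows
   (row_free G); the code is the row space of G. *)

Local Open Scope ring_scope.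

Definition ipE n (x y : 'rV['F_2]_n) : 'F_2 := \sum_(i < n) x 0 i * y 0 i.

Definition in_code k n (G : 'M['F_2]_(k, n)) (x : 'rV['F_2]_n) : bool :=
  (x <= G)%MS.

Definition in_dualE k n (G : 'M['F_2]_(k, n)) (x : 'rV['F_2]_n) : bool :=
  [forall y : 'rV['F_2]_n, in_code G y ==> (ipE x y == 0)].

Definition LCD_E k n (G : 'M['F_2]_(k, n)) : bool :=
  [forall x : 'rV['F_2]_n, (in_code G x && in_dualE G x) ==> (x == 0)].

Local Close Scope ring_scope.

Definition wt n (x : 'rV['F_2]_n) : nat := #|[set i : 'I_n | x ord0 i != 0%R]|.

(* Minimum distance = minimum weight of a nonzero codeword; for the zero
   code (no nonzero codeword) the convention is n+1 ("infinite"). *)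
Definition dmin k n (G : 'M['F_2]_(k, n)) : nat :=
  \big[minn/n.+1]_(x : 'rV['F_2]_n | in_code G x && (x != 0%R)) wt x.

Definition dE2 (n k : nat) : nat :=
  \max_(G : 'M['F_2]_(k, n) | row_free G && LCD_E G) dmin G.

From mathcomp Require Import all_boot all_order all_algebra.
Set Implicit Arguments. Unset Strict Implicit. Unset Printing Implicit Defensive.
Import Order.TTheory GRing.Theory.

(* Let C be a binary LCD code with generator matrix G. As the Gram matrix
   G G^T is invertible, every coordinate i has a representer u_i in C (a row
   of rep_mx G) with <u_i, c> = c_i for all c in C. Shortening C on a set T
   of coordinates (keeping the codewords that vanish on T, then deleting T)
   gives again an LCD code as soon as the matrix ((u_s)_t)_(s,t in T) is
   invertible: C is then the orthogonal sum of the shortened code and the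
   span of the u_t. The dimension drops by |T| and the minimum distance does
   not decrease. If some u_i is not self-orthogonal, T = {i} works. Otherwise
   pick u_i != 0 and j with (u_i)_j = 1; on T = {i, j} that matrix is
   [[0,1],[1,0]]. *)

Local Open Scope ring_scope.

Section Representers.
Variables (F : fieldType) (k N : nat) (G : 'M[F]_(k, N)).

Definition rep_mx p (f : 'I_p -> 'I_N) : 'M[F]_(p, N) :=
  (colsub f G)^T *m invmx (G *m G^T) *m G.

Lemma rep_mx_sub p (f : 'I_p -> 'I_N) : (rep_mx f <= G)%MS.
Proof. exact: submxMl. Qed.

Hypothesis gramG : G *m G^T \in unitmx.

Lemma rep_mxP p (f : 'I_p -> 'I_N) m (A : 'M_(m, N)) :
  (A <= G)%MS -> A *m (rep_mx f)^T = colsub f A.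
Proof.
case/submxP=> a ->; rewrite /rep_mx !trmx_mul trmxK trmx_inv trmx_mul trmxK.
by rewrite -!mulmxA [G *m _]mulmxA mulKVmx // mulmx_colsub.
Qed.

Lemma rep_mxC p q (f : 'I_p -> 'I_N) (g : 'I_q -> 'I_N) s t :
  rep_mx f s (g t) = rep_mx g t (f s).
Proof.
have := congr1 trmx (rep_mxP g (rep_mx_sub f)).
rewrite trmx_mul trmxK rep_mxP ?rep_mx_sub // => /matrixP/(_ t s).
by rewrite !mxE.
Qed.

End Representers.

Section Shortening.
Variables (F : fieldType) (k N p : nat) (G : 'M[F]_(k, N)) (f : 'I_p -> 'I_N).

Definition vanishing_subcode : 'M[F]_(k, N) := kermx (colsub f G) *m G.

Lemma sub_vanishing_subcode m (A : 'M_(m, N)) :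
  (A <= vanishing_subcode)%MS = (A <= G)%MS && (colsub f A == 0).
Proof.
apply/idP/andP => [/submxP[a ->] | [/submxP[a ->] /eqP]].
  by rewrite mulmxA submxMl -mulmx_colsub -mulmxA mulmx_ker mulmx0.
by rewrite -mulmx_colsub => /sub_kermxP /submxMr; apply.
Qed.

Lemma vanishing_subcode_sub : (vanishing_subcode <= G)%MS.
Proof. exact: submxMl. Qed.

Lemma colsub_vanishing_subcode : colsub f vanishing_subcode = 0.
Proof.
apply/eqP; move: (submx_refl vanishing_subcode).
by rewrite sub_vanishing_subcode => /andP[].
Qed.

Lemma mxrank_vanishing_subcode :
  row_free G -> \rank vanishing_subcode = (k - \rank (colsub f G))%N.
Proof. by move=> freeG; rewrite mxrankMfree // mxrank_ker. Qed.

Lemma mxrank_colsub_unit (W : 'M_(p, N)) :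
  (W <= G)%MS -> colsub f W \in unitmx -> \rank (colsub f G) = p.
Proof.
case/submxP=> a ->; rewrite -mulmx_colsub => /mxrank_unit rkW.
by apply/eqP; rewrite eqn_leq rank_leq_col -{1}rkW mxrankM_maxr.
Qed.

End Shortening.

Section Puncturing.
Variables (F : fieldType) (N N' : nat) (S : 'I_N' -> 'I_N).

Definition supported_in m (A : 'M[F]_(m, N)) :=
  forall i t, t \notin codom S -> A i t = 0.

Lemma supported_mull m n (B : 'M_(m, n)) (A : 'M_(n, N)) :
  supported_in A -> supported_in (B *m A).
Proof. by move=> suppA i t tS; rewrite mxE big1 // => j _; rewrite suppA ?mulr0. Qed.

Lemma colsub_mul1 m (A : 'M_(m, N)) : colsub S A = A *m colsub S (1%:M : 'M[F]_N).
Proof. by rewrite mulmx_colsub mulmx1. Qed.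

Hypothesis injS : injective S.

Lemma colsubK m (A : 'M_(m, N)) :
  supported_in A -> colsub S A *m (colsub S 1%:M)^T = A.
Proof.
move=> suppA; apply/matrixP => i t; rewrite mxE.
have [/codomP[b ->] | tS] := boolP (t \in codom S).
  rewrite (bigD1 b) //= big1 => [|c cb]; rewrite !mxE ?eqxx ?mulr1 ?addr0 //.
  by rewrite (inj_eq injS) eq_sym (negbTE cb) mulr0.
rewrite suppA // big1 // => b _; rewrite !mxE.
by case: eqP => [tSb | _]; [rewrite tSb codom_f in tS | rewrite mulr0].
Qed.

Lemma colsub_mul_tr m n (A : 'M_(m, N)) (B : 'M_(n, N)) :
  supported_in A -> colsub S A *m (colsub S B)^T = A *m B^T.
Proof. by move=> suppA; rewrite [colsub S B]colsub_mul1 trmx_mul mulmxA colsubK. Qed.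

Lemma mxrank_colsub m (A : 'M_(m, N)) : supported_in A -> \rank (colsub S A) = \rank A.
Proof.
move=> suppA; apply/eqP; rewrite eqn_leq; apply/andP; split.
  by rewrite colsub_mul1; apply: mxrankM_maxl.
by rewrite -{1}(colsubK suppA) mxrankM_maxl.
Qed.

End Puncturing.

Lemma exists_row_base (F : fieldType) m n r (A : 'M[F]_(m, n)) :
  \rank A = r -> exists B : 'M[F]_(r, n), row_free B /\ (B :=: A)%MS.
Proof.
by move=> <-; exists (row_base A); split; [apply: row_base_free | apply: eq_row_base].
Qed.

Lemma orth_submx (F : fieldType) m m' n (A : 'M[F]_(m, n)) (B : 'M_(m', n))
    (x : 'rV_n) :
  (B <= A)%MS -> x *m A^T = 0 -> x *m B^T = 0.
Proof. by case/submxP=> b -> xA0; rewrite trmx_mul mulmxA xA0 mul0mx. Qed.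

Lemma ipE_mx n (x y : 'rV['F_2]_n) : ipE x y = (x *m y^T) 0 0.
Proof. by rewrite /ipE mxE; apply: eq_bigr => i _; rewrite mxE. Qed.

Lemma in_dualEP k n (G : 'M['F_2]_(k, n)) x : reflect (x *m G^T = 0) (in_dualE G x).
Proof.
apply: (iffP forallP) => [orthG | xG0 y].
  apply/rowP => i; rewrite [RHS]mxE.
  have -> : (x *m G^T) 0 i = ipE x (row i G).
    by rewrite /ipE mxE; apply: eq_bigr => j _; rewrite !mxE.
  exact/eqP/(implyP (orthG _))/row_sub.
apply/implyP => /submxP[a ->].
by rewrite ipE_mx trmx_mul mulmxA xG0 mul0mx mxE.
Qed.

Lemma LCD_EP k n (G : 'M['F_2]_(k, n)) :
  reflect (forall x : 'rV_n, (x <= G)%MS -> x *m G^T = 0 -> x = 0) (LCD_E G).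
Proof.
apply: (iffP forallP) => [lcdG x xG /in_dualEP xG0 | lcdG x].
  by apply/eqP; move/implyP: (lcdG x); apply; rewrite /in_code xG.
by apply/implyP => /andP[xG /in_dualEP /(lcdG x xG) ->].
Qed.

Lemma eqmx_LCD_E m m' n (A : 'M['F_2]_(m, n)) (B : 'M_(m', n)) :
  (A :=: B)%MS -> LCD_E A = LCD_E B.
Proof.
move=> eqAB; have sAB : (A <= B)%MS by rewrite eqAB.
have sBA : (B <= A)%MS by rewrite eqAB.
apply/LCD_EP/LCD_EP => lcd x xM xM0.
  exact: lcd (submx_trans xM sBA) (orth_submx sAB xM0).
exact: lcd (submx_trans xM sAB) (orth_submx sBA xM0).
Qed.

Lemma LCD_E_gram_unit k n (G : 'M['F_2]_(k, n)) :
  row_free G -> LCD_E G -> G *m G^T \in unitmx.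
Proof.
move=> freeG /LCD_EP lcdG; rewrite -row_free_unit -kermx_eq0.
apply/rowV0P => b /sub_kermxP bGG0; apply/eqP.
rewrite -(mulmx_free_eq0 _ freeG); apply/eqP/lcdG; first exact: submxMl.
by rewrite -mulmxA.
Qed.

Lemma LCD_E_vanishing_subcode k N p (G : 'M['F_2]_(k, N)) (f : 'I_p -> 'I_N) :
  G *m G^T \in unitmx -> LCD_E G -> colsub f (rep_mx G f) \in unitmx ->
  LCD_E (vanishing_subcode G f).
Proof.
move=> gramG /LCD_EP lcdG unitR; apply/LCD_EP => x xD xD0.
have /andP[xG /eqP fx0] : (x <= G)%MS && (colsub f x == 0).
  by rewrite -sub_vanishing_subcode.
(* G = (G - G_f W) + G_f W, where the rows of the first summand lie in the
   subcode and those of the second in the span of the representers. *)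
set W := invmx (colsub f (rep_mx G f)) *m rep_mx G f.
have WG : (W <= G)%MS by apply: submx_trans (submxMl _ _) (rep_mx_sub G f).
have fW1 : colsub f W = 1%:M by rewrite -mulmx_colsub mulVmx.
have GfWD : (G - colsub f G *m W <= vanishing_subcode G f)%MS.
  rewrite sub_vanishing_subcode raddfB /= -mulmx_colsub fW1 mulmx1 subrr eqxx andbT.
  by rewrite addmx_sub // eqmx_opp (submx_trans (submxMl _ _) WG).
apply: (lcdG x xG); rewrite -[G in G^T](subrK (colsub f G *m W)) raddfD /= mulmxDr.
rewrite (orth_submx GfWD xD0) add0r trmx_mul mulmxA /W trmx_mul mulmxA.
by rewrite (rep_mxP gramG f xG) fx0 !mul0mx.
Qed.

Local Close Scope ring_scope.

Lemma wt_le n (x : 'rV['F_2]_n) : wt x <= n.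
Proof. by rewrite /wt -[X in _ <= X]card_ord max_card. Qed.

Lemma wt_lt n (x : 'rV['F_2]_n) i : x ord0 i = 0%R -> wt x < n.
Proof.
move=> xi0; rewrite /wt -[X in _ < X]card_ord -cardsT; apply: proper_card.
by rewrite properT; apply/eqP => /setP/(_ i); rewrite !inE xi0 eqxx.
Qed.

Lemma dmin_le k n (G : 'M['F_2]_(k, n)) x :
  (x <= G)%MS -> x != 0%R -> dmin G <= wt x.
Proof. by move=> xG xn0; rewrite /dmin -minEnat -leEnat bigmin_le_cond // /in_code xG. Qed.

Lemma dmin_ge k n (G : 'M['F_2]_(k, n)) d : d <= n.+1 ->
  (forall x, (x <= G)%MS -> x != 0%R -> d <= wt x) -> d <= dmin G.
Proof.
move=> dn dG; rewrite /dmin -minEnat -leEnat.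
by apply/bigmin_geP; split=> // x /andP[]; apply: dG.
Qed.

Lemma dmin_leS k n (G : 'M['F_2]_(k, n)) : dmin G <= n.+1.
Proof. by rewrite /dmin -minEnat -leEnat bigmin_le_id. Qed.

Lemma dmin_submx k k' n (G : 'M['F_2]_(k, n)) (D : 'M_(k', n)) :
  (D <= G)%MS -> dmin G <= dmin D.
Proof.
by move=> DG; apply: dmin_ge (dmin_leS G) _ => x xD; apply/dmin_le/(submx_trans xD).
Qed.

Lemma eqmx_dmin k k' n (A : 'M['F_2]_(k, n)) (B : 'M_(k', n)) :
  (A :=: B)%MS -> dmin A = dmin B.
Proof. by move=> eqAB; apply: eq_bigl => x; rewrite /in_code eqAB. Qed.

Lemma dmin_le_dE2 k n (G : 'M['F_2]_(k, n)) :
  row_free G -> LCD_E G -> dmin G <= dE2 n k.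
Proof. by move=> freeG lcdG; apply: leq_bigmax_cond; rewrite freeG lcdG. Qed.

Section BinaryPuncturing.
Variables (N N' : nat) (S : 'I_N' -> 'I_N).
Hypothesis injS : injective S.

Lemma wt_colsub (x : 'rV['F_2]_N) : supported_in S x -> wt (colsub S x) = wt x.
Proof.
move=> suppx; rewrite /wt.
have -> : [set t | x ord0 t != 0%R] = S @: [set b | colsub S x ord0 b != 0%R].
  apply/setP => t; rewrite inE; apply/idP/imsetP => [xt | [b]]; last first.
    by rewrite inE mxE => xb ->.
  have /codomP[b tE] : t \in codom S by apply: contraNT xt => /suppx ->.
  by exists b; rewrite // inE mxE -tE.
by rewrite card_imset.
Qed.

Variables (m : nat) (A : 'M['F_2]_(m, N)).
Hypothesis suppA : supported_in S A.

Lemma LCD_E_colsub : LCD_E A -> LCD_E (colsub S A).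
Proof.
move=> /LCD_EP lcdA; apply/LCD_EP => _ /submxP[a ->].
rewrite mulmx_colsub (colsub_mul_tr injS _ (supported_mull a suppA)) => aAA0.
by rewrite (lcdA _ (submxMl a A) aAA0) linear0.
Qed.

Lemma dmin_colsub : minn (dmin A) N'.+1 <= dmin (colsub S A).
Proof.
apply: dmin_ge (geq_minr _ _) _ => _ /submxP[a ->].
rewrite mulmx_colsub wt_colsub; last exact: supported_mull.
move=> xn0; apply: leq_trans (geq_minl _ _) (dmin_le (submxMl _ _) _).
by apply: contraNneq xn0 => ->; rewrite linear0.
Qed.

End BinaryPuncturing.

Theorem shorten_LCD p r N N' (G : 'M['F_2]_(p + r, N)) (f : 'I_p -> 'I_N)
    (S : 'I_N' -> 'I_N) :
  row_free G -> LCD_E G -> colsub f (rep_mx G f) \in unitmx ->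
  injective S -> (forall t, t \notin codom S -> t \in codom f) ->
  exists G' : 'M['F_2]_(r, N'),
    [/\ row_free G', LCD_E G' & minn (dmin G) N'.+1 <= dmin G'].
Proof.
move=> freeG lcdG unitR injS coverS.
have gramG := LCD_E_gram_unit freeG lcdG.
set D := vanishing_subcode G f.
have suppD : supported_in S D.
  move=> i t /coverS /codomP[s ->].
  by have /matrixP/(_ i s) := colsub_vanishing_subcode G f; rewrite !mxE.
have rkD : \rank (colsub S D) = r.
  rewrite mxrank_colsub // mxrank_vanishing_subcode //.
  by rewrite (mxrank_colsub_unit (rep_mx_sub G f) unitR) addKn.
have [G' [freeG' eqG']] := exists_row_base rkD.
exists G'; rewrite freeG' (eqmx_LCD_E eqG') (eqmx_dmin eqG').
split=> //; first exact: LCD_E_colsub (LCD_E_vanishing_subcode gramG lcdG unitR).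
apply: leq_trans (dmin_colsub injS suppD).
rewrite leq_min geq_minr andbT (leq_trans (geq_minl _ _)) //.
exact/dmin_submx/vanishing_subcode_sub.
Qed.

Notation coord_rep G i := (rep_mx G (fun _ : 'I_1 => i)).

Lemma shorten1_LCD k n (G : 'M['F_2]_(k.+1, n.+1)) j :
  row_free G -> LCD_E G -> coord_rep G j ord0 j != 0%R ->
  exists G1 : 'M['F_2]_(k, n), [/\ row_free G1, LCD_E G1 & dmin G <= dmin G1].
Proof.
move=> freeG lcdG rjj.
have unitR : colsub (fun=> j) (coord_rep G j) \in unitmx.
  by rewrite unitmxE det_mx11 mxE unitfE.
have coverS t : t \notin codom (lift j) -> t \in codom (fun _ : 'I_1 => j).
  case: (unliftP j t) => [t' -> | -> _]; first by rewrite codom_f.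
  exact: (codom_f (fun _ : 'I_1 => j) ord0).
have [G1 [freeG1 lcdG1 dG1]] :=
  shorten_LCD (p := 1) freeG lcdG unitR (@lift_inj _ j) coverS.
exists G1; split=> //; apply: leq_trans dG1; rewrite leq_min leqnn /=.
apply: leq_trans (wt_le (coord_rep G j)); apply: dmin_le (rep_mx_sub _ _) _.
by apply: contraNneq rjj => ->; rewrite mxE.
Qed.

Lemma F2_eq1 (z : 'F_2) : z != 0%R -> z = 1%R.
Proof. by case: z => [[|[|m]] //= zlt] _; apply: val_inj. Qed.

Lemma ord2P (s : 'I_2) : s = ord0 \/ s = ord_max.
Proof. by case: s => [[|[|//]] ?]; [left | right]; apply: val_inj. Qed.

Lemma swap2_unitmx (M : 'M['F_2]_2) :
  M ord0 ord0 = 0%R -> M ord_max ord_max = 0%R ->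
  M ord0 ord_max = 1%R -> M ord_max ord0 = 1%R -> M \in unitmx.
Proof.
move=> M00 M11 M01 M10; suff /mulmx1_unit[] : (M *m M = 1%:M)%R by [].
apply/matrixP => s t; rewrite !mxE !big_ord_recl big_ord0.
have -> : lift ord0 ord0 = ord_max :> 'I_2 by apply: val_inj.
by case: (ord2P s) => ->; case: (ord2P t) => ->;
  rewrite ?M00 ?M11 ?M01 ?M10; apply: val_inj.
Qed.

Lemma shorten2_LCD k n (G : 'M['F_2]_(k.+2, n.+2)) i j :
  row_free G -> LCD_E G ->
  coord_rep G i ord0 i = 0%R -> coord_rep G j ord0 j = 0%R ->
  coord_rep G i ord0 j != 0%R ->
  exists G2 : 'M['F_2]_(k, n), [/\ row_free G2, LCD_E G2 & dmin G <= dmin G2].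
Proof.
move=> freeG lcdG rii rjj rij.
have gramG := LCD_E_gram_unit freeG lcdG.
have [j' jE] : exists j', j = lift i j'.
  by case: (unliftP i j) => [j' ->| jE]; [exists j' | rewrite jE rii eqxx in rij].
pose f (s : 'I_2) := if s == ord0 then i else j.
set M := colsub f (rep_mx G f).
have Mst s t : M s t = coord_rep G (f t) ord0 (f s).
  by rewrite mxE; apply: (rep_mxC gramG f (fun=> f t) s ord0).
have rji : coord_rep G j ord0 i = coord_rep G i ord0 j.
  exact: (rep_mxC gramG (fun=> j) (fun=> i) ord0 ord0).
have unitM : M \in unitmx.
  have rij1 := F2_eq1 rij.
  have f0 : f ord0 = i by rewrite /f eqxx.
  have f1 : f ord_max = j by [].
  by apply: swap2_unitmx; rewrite Mst ?f0 ?f1 // rji.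
pose S (b : 'I_n) := lift i (lift j' b).
have injS : injective S by move=> a b /lift_inj /lift_inj.
have coverS t : t \notin codom S -> t \in codom f.
  case: (unliftP i t) => [t' -> | -> _]; last exact: (codom_f f ord0).
  case: (unliftP j' t') => [b -> /negP[] | -> _]; first exact: (codom_f S b).
  by rewrite -jE; exact: (codom_f f (lift ord0 ord0)).
have [G2 [freeG2 lcdG2 dG2]] := shorten_LCD (p := 2) freeG lcdG unitM injS coverS.
exists G2; split=> //; apply: leq_trans dG2; rewrite leq_min leqnn /= -ltnS.
apply: leq_ltn_trans (wt_lt rii); apply: dmin_le (rep_mx_sub _ _) _.
by apply: contraNneq rij => ->; rewrite mxE.
Qed.

Lemma LCD_shorten_dichotomy k n (G : 'M['F_2]_(k.+2, n.+2)) :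
  row_free G -> LCD_E G ->
  (exists G1 : 'M['F_2]_(k.+1, n.+1), [/\ row_free G1, LCD_E G1 & dmin G <= dmin G1]) \/
  (exists G2 : 'M['F_2]_(k, n), [/\ row_free G2, LCD_E G2 & dmin G <= dmin G2]).
Proof.
move=> freeG lcdG.
have [j rjj | isotropic] := pickP (fun t => coord_rep G t ord0 t != 0%R).
  by left; apply: shorten1_LCD freeG lcdG rjj.
right; have gramG := LCD_E_gram_unit freeG lcdG.
have /matrix0Pn[r [i Gri]] : G != 0%R.
  by apply: contraTneq freeG => ->; rewrite /row_free mxrank0.
have [j rij] : exists j, coord_rep G i ord0 j != 0%R.
  apply/existsP; apply: contraTT Gri; rewrite negb_exists => /forallP ri0.
  have /matrixP/(_ ord0 ord0) := rep_mxP gramG (fun _ : 'I_1 => i) (row_sub r G).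
  rewrite !mxE => <-; rewrite negbK big1 // => t _.
  by rewrite [(_^T)%R _ _]mxE (eqP (negbNE (ri0 t))) mulr0.
by apply: (shorten2_LCD freeG lcdG) rij; apply/eqP/negbFE/isotropic.
Qed.

Theorem corollary4p4 (k n : nat) :
  2 <= k -> k <= n ->
  dE2 n k <= maxn (dE2 (n - 1) (k - 1)) (dE2 (n - 2) (k - 2)).
Proof.
case: k => [|[|k]] // _; case: n => [|[|n]] // _; rewrite !subSS !subn0.
apply/bigmax_leqP => G /andP[freeG lcdG].
have [[G1 [freeG1 lcdG1 dG1]] | [G2 [freeG2 lcdG2 dG2]]] :=
  LCD_shorten_dichotomy freeG lcdG.
  by rewrite leq_max (leq_trans dG1) ?dmin_le_dE2.
by rewrite leq_max orbC (leq_trans dG2) ?dmin_le_dE2.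
Qed.
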